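(* Let $n,x$ be integers with $1<x<n$, so that $G=C_{2n}(x,1,n)$ is a $5$-regular circulant graph. If $n\equiv x\equiv 2 \pmod 3$, then $G$ is word-representable.
   Context: Two distinct letters $x,y$ alternate in a word $w$ if, after deleting all other letters from $w$, the resulting word is of the form $xyxy\cdots$ or $yxyx\cdots$ (of even or odd length). A graph $G=(V,E)$ is word-representable if there is a word $w$ over the alphabet $V$, containing every letter of $V$ at least once, such that for all distinct $x,y\in V$, $xy\in E$ if and only if $x$ and $y$ alternate in $w$. For an integer $m$ and a set $R$ of positive integers each at most $m/2$, the circulant graph $C_m(R)$ has vertex set $\{0,1,\dots,m-1\}$, with $i$ and $j$ adjacent iff $\min(|i-j|,\,m-|i-j|)\in R$. $C_{2n}(x,1,n)$ denotes the circulant graph on $2n$ vertices with jump set $\{1,x,n\}$; it is $5$-regular exactly when $1<x<n$. *)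

From mathcomp Require Import all_boot.
Set Implicit Arguments.
Local Open Scope nat_scope. Unset Strict Implicit. Unset Printing Implicit Defensive.

Definition restrict2 (T : eqType) (w : seq T) (a b : T) : seq T :=
  filter (fun z => (z == a) || (z == b)) w.

(* a and b alternate in w: the restriction of w to {a,b} has no two equal
   consecutive letters, i.e. it is of the form abab... or baba... *)
Definition alternate (T : eqType) (w : seq T) (a b : T) : bool :=
  sorted (fun u v => u != v) (restrict2 w a b).

Definition word_representable (T : finType) (E : rel T) : Prop :=
  exists w : seq T,
    (forall v : T, v \in w) /\
    (forall a b : T, a != b -> (E a b <-> alternate w a b)).

Definition absdiff (i j : nat) : nat := if i <= j then j - i else i - j.

Definition circulant (m : nat) (R : pred nat) : rel 'I_m :=
  fun i j => let d := absdiff i j in minn d (m - d) \in R.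
Arguments circulant : clear implicits.

Definition C2n_x1n (n x : nat) : rel 'I_(2 * n)%N :=
  circulant (2 * n)%N [pred k | (k == 1) || (k == x) || (k == n)].
Arguments C2n_x1n : clear implicits.

From mathcomp Require Import all_boot zify.
Set Implicit Arguments. Unset Strict Implicit. Unset Printing Implicit Defensive.

(* Orient every edge of a graph upwards along a height function h.  If this
   orientation is semi-transitive (for every edge a -> b and directed walk
   a ->* p ->* q ->* b with h p < h q, pq is an edge), the graph is
   word-representable: take the vertices sorted by height, then for every
   non-adjacent pair p, q with h p < h q a gadget made of sublists of that
   sorted list, which restricts to abab on every edge a -> b but contains a
   factor yy on {p, q}, then the sorted list again, and finally the vertices
   sorted by height with ties in the reverse order.
   For C_{2n}(x,1,n) with n = x = 2 (mod 3), put vertex 0 at height 1 and the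
   other vertices i = 0, 1, 2 (mod 3) at heights 0, 2, 3; every edge joins
   different heights.  As heights are below 4, semi-transitivity can only fail
   along a path a -> m1 -> m2 -> b with ab an edge, and the only such path is
   2n-1 -> 0 -> 1 -> 2, whose ends are not adjacent. *)

Section Restriction.
Variable T : eqType.
Implicit Types (s w : seq T) (a b y : T).

Lemma restrict2_cat s1 s2 a b :
  restrict2 (s1 ++ s2) a b = restrict2 s1 a b ++ restrict2 s2 a b.
Proof. exact: filter_cat. Qed.

Lemma restrict2_flatten (L : seq (seq T)) a b :
  restrict2 (flatten L) a b = flatten [seq restrict2 s a b | s <- L].
Proof. by elim: L => //= s L IH; rewrite restrict2_cat IH. Qed.

Lemma restrict2_filter (p : pred T) s a b :
  restrict2 (filter p s) a b = filter p (restrict2 s a b).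
Proof.
by rewrite /restrict2 -!filter_predI; apply: eq_filter => z /=; rewrite andbC.
Qed.

Lemma restrict2_rev s a b : restrict2 (rev s) a b = rev (restrict2 s a b).
Proof. exact: filter_rev. Qed.

Lemma restrict2_infix s w a b :
  infix s w -> infix (restrict2 s a b) (restrict2 w a b).
Proof. by case/infixP=> [u [v ->]]; rewrite !restrict2_cat infix_infix. Qed.

Lemma alternateC w a b : alternate w a b = alternate w b a.
Proof.
rewrite /alternate /restrict2; congr sorted.
by apply: eq_filter => z; rewrite orbC.
Qed.

Lemma alternate_double w a b y :
  infix [:: y; y] (restrict2 w a b) -> ~~ alternate w a b.
Proof. by move=> yy; apply/negP => /(infix_sorted yy) /=; rewrite eqxx. Qed.

Lemma alternate_ab_power w a b k : a != b ->
  restrict2 w a b = flatten (nseq k [:: a; b]) -> alternate w a b.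
Proof.
move=> ab; rewrite /alternate => ->; case: k => //= k; rewrite ab /=.
by elim: k => //= k ->; rewrite eq_sym ab.
Qed.

Lemma flatten_ab_power (L : seq (seq T)) a b :
  (forall s, s \in L -> exists k, s = flatten (nseq k [:: a; b])) ->
  exists k, flatten L = flatten (nseq k [:: a; b]).
Proof.
elim: L => [|s L IH] L_ab /=; first by exists 0.
have [k1 ->] := L_ab s (mem_head _ _).
have [k2 ->] : exists k, flatten L = flatten (nseq k [:: a; b]).
  by apply: IH => t tL; apply: L_ab; rewrite inE tL orbT.
by exists (k1 + k2); rewrite nseqD flatten_cat.
Qed.

End Restriction.

Section SemiTransitive.
Variables (T : finType) (E : rel T) (h : T -> nat).

Definition up : rel T := fun u v => E u v && (h u < h v).

Definition semi_transitive := forall a b p q, up a b ->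
  connect up a p -> connect up p q -> connect up q b -> h p < h q -> E p q.

Lemma path_up_height u s : path up u s -> h u + size s <= h (last u s).
Proof.
elim: s u => [|v s IH] u /=; first by rewrite addn0.
case/andP=> /andP[_ huv] /IH; rewrite addnS; apply: leq_trans.
by rewrite ltn_add2r.
Qed.

Lemma connect_up_height u v : connect up u v -> h u <= h v.
Proof.
by case/connectP=> s /path_up_height + ->; apply: leq_trans; apply: leq_addr.
Qed.

Section Height4.
Hypothesis h_lt4 : forall v, h v < 4.
Hypothesis no_shortcut :
  forall a m1 m2 b, up a m1 -> up m1 m2 -> up m2 b -> ~~ E a b.

Lemma long_path_no_shortcut a s :
  path up a s -> 3 <= size s -> ~~ E a (last a s).
Proof.
move=> pas; have := path_up_height pas; have := h_lt4 (last a s).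
case: s pas => [|m1 [|m2 [|b [|c s]]]] //=; last by move=> *; exfalso; lia.
by case/and4P=> am1 m12 m2b _ *; apply: no_shortcut am1 m12 m2b.
Qed.

Lemma semi_transitive_height4 : semi_transitive.
Proof.
move=> a b p q ab /connectP[s1 ps1 ->] /connectP[s2 ps2 ->].
case/connectP=> s3 ps3 b_eq hpq; have /andP[Eab _] := ab.
case: s2 ps2 hpq b_eq ps3 => [|m [|m' s2]] /=; first by rewrite ltnn.
  by rewrite andbT /up => /andP[].
move=> ps2 _ b_eq ps3.
case: (posnP (size s1 + size s3)) => [/eqP | s13_gt0].
  rewrite addn_eq0 !size_eq0 => /andP[/eqP s1_nil /eqP s3_nil].
  by move: b_eq; rewrite s1_nil s3_nil /= => <-.
(* Otherwise the walk a ->* p ->* q ->* b has at least three edges. *)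
have path_ab : path up a (s1 ++ [:: m, m' & s2] ++ s3).
  by rewrite !cat_path ps1 /= ps2 ps3.
have long : 3 <= size (s1 ++ [:: m, m' & s2] ++ s3).
  by rewrite !size_cat /=; lia.
by have /negP[] := long_path_no_shortcut path_ab long; rewrite !last_cat -b_eq.
Qed.
End Height4.

End SemiTransitive.

Section Construction.
Variables (T : finType) (E : rel T) (h : T -> nat).
Hypotheses (E_sym : symmetric E) (E_height : forall a b, E a b -> h a != h b).
Hypothesis E_semi_transitive : semi_transitive E h.

Local Notation up := (up E h).
Local Notation reach := (connect up).

Definition by_height (s : seq T) : seq T := sort (fun u v => h u <= h v) s.

Definition height_enum := by_height (enum T).

(* Restricted to {p, q}, gadget_reach reads ppqq and gadget_unreach q reads
   pqqp; restricted to an edge a -> b both read abab, for gadget_reach p q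
   thanks to semi-transitivity when p ->* q and pq is not an edge. *)
Definition gadget_reach (p q : T) : seq T :=
  [seq v <- height_enum | ~~ reach q v] ++
  [seq v <- height_enum | reach v p || reach q v] ++
  [seq v <- height_enum | ~~ reach v p].

Definition gadget_unreach (q : T) : seq T :=
  height_enum ++ [seq v <- height_enum | reach v q] ++
  [seq v <- height_enum | ~~ reach v q].

Definition gadget (p q : T) : seq T :=
  if ~~ E p q && (h p < h q) then
    if reach p q then gadget_reach p q else gadget_unreach q
  else [::].

Definition gadgets := flatten [seq gadget p q | p <- enum T, q <- enum T].

Definition word :=
  flatten [:: height_enum; gadgets; height_enum; by_height (rev (enum T))].

Lemma by_height2 u v :
  by_height [:: u; v] = if h v < h u then [:: v; u] else [:: u; v].
Proof. by rewrite /by_height /sort /= leqNgt; case: ltnP. Qed.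

Lemma restrict2_by_height s a b :
  restrict2 (by_height s) a b = by_height (restrict2 s a b).
Proof.
apply: filter_sort => [u v | v u w]; [exact: leq_total | exact: leq_trans].
Qed.

Lemma restrict2_enum a b : a != b ->
  restrict2 (enum T) a b = [:: a; b] \/ restrict2 (enum T) a b = [:: b; a].
Proof.
move=> ab; set r := restrict2 _ a b.
have r_uniq : uniq r by rewrite filter_uniq ?enum_uniq.
have r_mem z : (z \in r) = (z \in [:: a; b]).
  by rewrite mem_filter mem_enum andbT !inE.
have /perm_size : perm_eq r [:: a; b] by apply: uniq_perm; rewrite //= inE ab.
case: r r_uniq r_mem => [|u [|v []]] //= /andP[]; rewrite inE => uv _ r_mem _.
move: (r_mem a) (r_mem b); rewrite !inE !eqxx orbT /=.
case/orP=> /eqP a_eq /orP[]/eqP b_eq; subst;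
  by [left | right | rewrite eqxx in ab].
Qed.

Lemma restrict2_height_enum_lt a b : h a < h b ->
  restrict2 height_enum a b = [:: a; b] /\
  restrict2 (by_height (rev (enum T))) a b = [:: a; b].
Proof.
move=> hab; have ab : a != b by apply: contraTneq hab => ->; rewrite ltnn.
rewrite !restrict2_by_height restrict2_rev.
have hba : (h b < h a) = false by apply/leq_gtF/ltnW.
by case: (restrict2_enum ab) => -> /=; rewrite !by_height2 hab hba.
Qed.

Lemma restrict2_height_enum_eq a b : a != b -> h a = h b ->
  exists u v, restrict2 height_enum a b = [:: u; v] /\
              restrict2 (by_height (rev (enum T))) a b = [:: v; u].
Proof.
move=> ab hab; rewrite !restrict2_by_height restrict2_rev.
case: (restrict2_enum ab) => -> /=; rewrite !by_height2 hab ltnn.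
all: by do 2 eexists.
Qed.

Lemma restrict2_gadget_reach a b p q : up a b -> ~~ E p q -> h p < h q ->
  reach p q -> restrict2 (gadget_reach p q) a b = [:: a; b; a; b].
Proof.
move=> ab nEpq hpq pq; have /andP[_ hab] := ab.
rewrite !restrict2_cat !restrict2_filter (restrict2_height_enum_lt hab).1 /=.
have bp_ap : reach b p ==> reach a p.
  by apply/implyP; apply: connect_trans; apply: connect1.
have qa_qb : reach q a ==> reach q b.
  by apply/implyP => qa; apply: connect_trans qa (connect1 ab).
have no_cycle v : ~~ (reach v p && reach q v).
  apply/negP => /andP[vp qv]; have := connect_up_height (connect_trans qv vp).
  by rewrite leqNgt hpq.
have no_cross : ~~ (reach a p && reach q b).
  apply/negP => /andP[ap qb].
  by rewrite (E_semi_transitive ab ap pq qb hpq) in nEpq.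
move: bp_ap qa_qb (no_cycle a) (no_cycle b) no_cross.
by case: (reach a p); case: (reach b p); case: (reach q a); case: (reach q b).
Qed.

Lemma restrict2_gadget_unreach a b q : up a b ->
  restrict2 (gadget_unreach q) a b = [:: a; b; a; b].
Proof.
move=> ab; have /andP[_ hab] := ab.
rewrite !restrict2_cat !restrict2_filter (restrict2_height_enum_lt hab).1 /=.
have bq_aq : reach b q ==> reach a q.
  by apply/implyP; apply: connect_trans; apply: connect1.
by move: bq_aq; case: (reach a q); case: (reach b q).
Qed.

Lemma restrict2_gadget_nonedge a b : ~~ E a b -> h a < h b ->
  exists y, infix [:: y; y] (restrict2 (gadget a b) a b).
Proof.
move=> nEab hab; have ba : ~~ reach b a.
  by apply/negP => /connect_up_height; rewrite leqNgt hab.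
rewrite /gadget nEab hab /=; case: ifP => ab;
  rewrite !restrict2_cat !restrict2_filter (restrict2_height_enum_lt hab).1 /=;
  rewrite !connect0 ?ab ?(negbTE ba) /=.
- by exists a; rewrite eqxx.
- by exists b; rewrite eqxx orbT.
Qed.

Lemma restrict2_gadgets_edge a b : up a b ->
  exists k, restrict2 gadgets a b = flatten (nseq k [:: a; b]).
Proof.
move=> ab; rewrite restrict2_flatten; apply: flatten_ab_power.
move=> _ /mapP[_ /allpairsP[[p q] [_ _ ->]] ->] /=; rewrite /gadget.
case: ifP => [/andP[nEpq hpq] | _]; last by exists 0.
exists 2; case: ifP => pq.
- exact: restrict2_gadget_reach.
- exact: restrict2_gadget_unreach.
Qed.

Lemma infix_gadget_word p q : infix (gadget p q) word.
Proof.
rewrite /word /gadgets /=.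
case/splitPr: (allpairs_f gadget (mem_enum T p) (mem_enum T q)) => L1 L2.
by rewrite flatten_cat /=; apply/infix_catl/infix_catr/infix_infix.
Qed.

Lemma alternate_word_lt a b : h a < h b -> E a b = alternate word a b.
Proof.
move=> hab; have [P_ab P'_ab] := restrict2_height_enum_lt hab.
apply/idP/idP => [Eab | ].
- have ab : up a b by rewrite /up Eab hab.
  have [k Gk] := restrict2_gadgets_edge ab.
  have [m word_ab] : exists m,
      restrict2 word a b = flatten (nseq m [:: a; b]).
    rewrite restrict2_flatten; apply: flatten_ab_power => s.
    by rewrite !inE => /or4P[] /eqP->;
      [exists 1 | exists k | exists 1 | exists 1].
  apply: alternate_ab_power word_ab.
  by apply: contraTneq hab => ->; rewrite ltnn.
- apply: contraLR => nEab.
  have [y yy] := restrict2_gadget_nonedge nEab hab.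
  apply: (alternate_double (y := y)); apply: infix_trans yy _.
  exact/restrict2_infix/infix_gadget_word.
Qed.

Lemma alternate_word_eq a b : a != b -> h a = h b -> ~~ alternate word a b.
Proof.
move=> ab hab; have [u [v [P_ab P'_ab]]] := restrict2_height_enum_eq ab hab.
apply: (alternate_double (y := v)).
rewrite restrict2_flatten /= P_ab P'_ab cats0; apply/infixP.
by exists ([:: u; v] ++ restrict2 gadgets a b ++ [:: u]), [:: u]; rewrite -!catA.
Qed.

Theorem semi_transitive_word_representable : word_representable E.
Proof.
exists word; split => [v | a b ab].
  by rewrite /word /= mem_cat mem_sort mem_enum.
case: (ltngtP (h a) (h b)) => hab.
- by rewrite (alternate_word_lt hab).
- by rewrite E_sym alternateC (alternate_word_lt hab).
- split => [/E_height | alt]; first by rewrite hab eqxx.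
  by have := alternate_word_eq ab hab; rewrite alt.
Qed.

End Construction.

Lemma absdiffC i j : absdiff i j = absdiff j i.
Proof. by rewrite /absdiff; case: ltngtP => // ->. Qed.

Lemma absdiffP i j : i + absdiff i j = j \/ j + absdiff i j = i.
Proof. by rewrite /absdiff; case: leqP => ?; lia. Qed.

Section Circulant.
Variables n x : nat.
Local Notation G := (C2n_x1n n x).

(* As 2n = 1 (mod 3), the edge {2n-1, 0} joins two multiples of 3, so vertex 0
   gets a height of its own. *)
Definition level (i : 'I_(2 * n)) : nat :=
  if i == 0 :> nat then 1
  else if i %% 3 == 0 then 0 else if i %% 3 == 1 then 2 else 3.

Lemma level_cases (i : 'I_(2 * n)) :
  [\/ i = 0 :> nat /\ level i = 1, 0 < i /\ i %% 3 = 0 /\ level i = 0,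
      i %% 3 = 1 /\ level i = 2 | i %% 3 = 2 /\ level i = 3].
Proof.
rewrite /level; case: eqP => [|i_neq0]; first by constructor 1.
case: eqP => [|i_mod3_neq0]; first by constructor 2; split => //; lia.
by case: eqP => [|?]; [constructor 3 | constructor 4; split => //; lia].
Qed.

Lemma level_lt4 i : level i < 4.
Proof. by rewrite /level; repeat case: ifP. Qed.

Lemma C2n_x1n_sym : symmetric G.
Proof. by move=> i j; rewrite /C2n_x1n /circulant absdiffC. Qed.

Lemma C2n_x1n_diff (i j : 'I_(2 * n)) : G i j ->
  exists2 d, i + d = j \/ j + d = i &
    d = 1 \/ d = x \/ d = n \/ d = (2 * n).-1 \/ d = 2 * n - x.
Proof.
move=> Gij; exists (absdiff i j); first exact: absdiffP.
have := absdiffP i j; have := ltn_ord i; have := ltn_ord j.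
by move: Gij; rewrite /C2n_x1n /circulant !inE -orbA => /or3P[] /eqP; lia.
Qed.

Hypotheses (x_lt_n : x < n) (n_mod3 : n %% 3 = 2) (x_mod3 : x %% 3 = 2).

Lemma C2n_x1n_level (i j : 'I_(2 * n)) : G i j -> level i != level j.
Proof.
case/C2n_x1n_diff=> d ij d_jump; apply/eqP.
have := ltn_ord i; have := ltn_ord j.
by case: (level_cases i) => ?; case: (level_cases j) => ?; lia.
Qed.

Lemma C2n_x1n_no_shortcut a m1 m2 b :
  up G level a m1 -> up G level m1 m2 -> up G level m2 b -> ~~ G a b.
Proof.
case/andP=> a_m1 lvl_am1 /andP[m1_m2 lvl_m12] /andP[m2_b lvl_m2b].
have := level_lt4 b => lvl_b.
have m1_0 : m1 = 0 :> nat by case: (level_cases m1) => ?; lia.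
have a_last : a = (2 * n).-1 :> nat.
  have [d ? ?] := C2n_x1n_diff a_m1; have := ltn_ord a.
  by case: (level_cases a) => ?; lia.
have m2_1 : m2 = 1 :> nat.
  by have [d ? ?] := C2n_x1n_diff m1_m2; case: (level_cases m2) => ?; lia.
have b_2 : b = 2 :> nat.
  have [d ? ?] := C2n_x1n_diff m2_b; have := ltn_ord b.
  by case: (level_cases b) => ?; lia.
by apply/negP => /C2n_x1n_diff[d ? ?]; lia.
Qed.

End Circulant.

Theorem theorem21 (n x : nat) :
  1 < x -> x < n -> n %% 3 = 2 -> x %% 3 = 2 ->
  word_representable (C2n_x1n n x).
Proof.
(* 1 < x already follows from x %% 3 = 2. *)
move=> _ x_lt_n n_mod3 x_mod3.
apply: (@semi_transitive_word_representable _ _ (@level n)).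
- exact: C2n_x1n_sym.
- exact: C2n_x1n_level.
- apply: semi_transitive_height4; first exact: level_lt4.
  exact: C2n_x1n_no_shortcut.
Qed.
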